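(* For all integers $q\ge 2$ and $m\ge 1$, the fractal star matrix $M_{q,m}$ is the star matrix of a partition of the hypercube ${\bf Z}_q^{(q^m-1)/(q-1)}$ into $q^m$ subcubes, each of dimension $\frac{q^m-1}{q-1}-m$.
   Context: A subcube of ${\bf Z}_q^n$ is obtained by fixing some coordinates and letting the others run through ${\bf Z}_q$; its star pattern is the vector over ${\bf Z}_q\cup\{*\}$ with the fixed values in fixed coordinates and $*$ in free ones. A matrix over ${\bf Z}_q\cup\{*\}$ is the star matrix of a partition if its rows are the star patterns of the subcubes of a partition of ${\bf Z}_q^n$ (each vector in exactly one subcube). The fractal matrices $M_{q,m}$ are defined recursively: $M_{q,0}$ has one row and zero columns; for $m\ge1$, $M_{q,m}$ consists of $q$ horizontal blocks indexed by $a=0,1,\dots,q-1$, each block having $q^{m-1}$ rows; the first column of $M_{q,m}$ has the entry $a$ in every row of block $a$; the remaining columns are divided into $q$ vertical stripes, each of width equal to the number of columns of $M_{q,m-1}$, and in block $a$ the $a$-th vertical stripe (counting from $0$) is a copy of $M_{q,m-1}$ while all other stripes of block $a$ consist only of $*$. *)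

From mathcomp Require Import all_boot.
Set Implicit Arguments. Unset Strict Implicit. Unset Printing Implicit Defensive.

(* Z_q is represented by 'I_q (we always assume q >= 2).
   An entry of a star matrix is an [option 'I_q]: [Some a] = fixed value a,
   [None] = the star symbol *.  A star matrix is a list of rows. *)
Definition entry (q : nat) := option 'I_q.
Definition star_matrix (q : nat) := seq (seq (entry q)).

Fixpoint ncols (q m : nat) : nat :=
  if m is m'.+1 then (1 + q * ncols q m')%N else 0.

(* The fractal matrix M_{q,m}, built by the recursive definition:
   blocks a = 0..q-1 in order; row of block a = a :: stripes, where stripe a
   is the corresponding row of M_{q,m-1} and other stripes are all stars. *)
Fixpoint fractal (q m : nat) : star_matrix q :=
  match m with
  | 0 => [:: [::]]
  | m'.+1 =>
      flatten [seq [seq Some a :: flatten [seq (if b == a then r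
                                                 else nseq (ncols q m') None)
                                           | b <- enum 'I_q]
                   | r <- fractal q m']
              | a <- enum 'I_q]
  end.

Definition in_subcube (q n : nat) (r : seq (entry q)) (x : {ffun 'I_n -> 'I_q}) : bool :=
  [forall i : 'I_n, if nth None r i is Some a then x i == a else true].

Definition subcube_dim (q : nat) (r : seq (entry q)) : nat := count (pred1 None) r.

Definition is_partition_star_matrix (q n : nat) (M : star_matrix q) : Prop :=
  all (fun r => size r == n) M /\
  forall x : {ffun 'I_n -> 'I_q}, count (fun r => in_subcube r x) M = 1%N.

From mathcomp Require Import all_boot zify.
Set Implicit Arguments. Unset Strict Implicit. Unset Printing Implicit Defensive.

(* Write a vector of Z_q^(1 + q N), N = ncols q m, as (c, x).  It can only lie
   in a subcube of the block c of M_{q,m+1}, and inside that block only the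
   stripe c constrains x, so by induction it lies in exactly one subcube.  Rows
   and stars obey |M_{q,m+1}| = q |M_{q,m}| and dim_{m+1} = dim_m + (q - 1) N,
   and (q - 1) ncols q m = q^m - 1 identifies the number of columns. *)

Lemma ncols_geom q m : (q - 1) * ncols q m = q ^ m - 1.
Proof.
elim: m => [|m IHm] /=; first by rewrite muln0.
rewrite expnS mulnDr mulnCA IHm; case: q {IHm} => [|q] /=; first by rewrite mul0n.
have := expn_gt0 q.+1 m; nia.
Qed.

Lemma ncols_div q m : 1 < q -> (q ^ m - 1) %/ (q - 1) = ncols q m.
Proof. by move=> q_gt1; rewrite -ncols_geom mulKn // subn_gt0. Qed.

Lemma leq_ncols q m : 0 < q -> m <= ncols q m.
Proof. by move=> q_gt0; elim: m => //= m IHm; nia. Qed.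

Lemma flatten_map_nseq (S : eqType) (T : Type) (x : T) N (s : seq S) (f : S -> seq T) :
  {in s, forall i, f i = nseq N x} -> flatten (map f s) = nseq (size s * N) x.
Proof.
elim: s => //= i s IHs f_nseq.
rewrite f_nseq ?mem_head // IHs ?nseqD // => j s_j.
by rewrite f_nseq // inE s_j orbT.
Qed.

Definition fits q (r : seq (entry q)) (x : seq 'I_q) : bool :=
  all2 (fun e b => if e is Some a then b == a else true) r x.

Lemma fits_catl q (r1 r2 : seq (entry q)) x :
  fits (r1 ++ r2) x = fits r1 (take (size r1) x) && fits r2 (drop (size r1) x).
Proof.
elim: r1 x => [|e r1 IHr1] [|b x] //=.
by rewrite IHr1 andbA.
Qed.

Lemma fits_stars q n (x : seq 'I_q) : fits (nseq n None) x = (size x == n).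
Proof. by elim: n x => [|n IHn] [|b x] //=; rewrite IHn. Qed.

Lemma in_subcube_fits q n (r : seq (entry q)) (x : {ffun 'I_n -> 'I_q}) :
  size r = n -> in_subcube r x = fits r (codom x).
Proof.
move=> size_r; rewrite /fits all2E size_codom card_ord size_r eqxx /=.
have r_enum : r = [seq nth None r i | i : 'I_n <- enum 'I_n].
  by rewrite -{1}(mkseq_nth None r) size_r /mkseq -val_enum_ord -map_comp.
rewrite codomE [in zip r _]r_enum zip_map all_map.
apply/forallP/allP => [in_x i _ | in_x i]; first exact: in_x.
by apply: in_x; rewrite mem_enum.
Qed.

Section Stripes.

Variables (q N : nat) (a : 'I_q).

Definition stripes (r : seq (entry q)) : seq (entry q) :=
  flatten [seq (if b == a then r else nseq N None) | b <- enum 'I_q].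

Lemma stripesE r : stripes r = nseq (a * N) None ++ r ++ nseq ((q - a.+1) * N) None.
Proof.
have -> : stripes r =
    flatten [seq (if i == val a then r else nseq N None) | i <- iota 0 q].
  by rewrite -val_enum_ord -map_comp.
have -> : iota 0 q = iota 0 a ++ val a :: iota a.+1 (q - a.+1).
  by rewrite -[in LHS](subnKC (ltnW (ltn_ord a))) iotaD -subnSK.
rewrite map_cat flatten_cat /= eqxx.
rewrite !(flatten_map_nseq (x := None) (N := N)) ?size_iota // => i.
  by rewrite mem_iota => /andP[a_lt_i _]; rewrite gtn_eqF.
by rewrite mem_iota => /andP[_ i_lt_a]; rewrite ltn_eqF.
Qed.

Lemma size_stripes r : size r = N -> size (stripes r) = q * N.
Proof.
by move=> size_r; rewrite stripesE !size_cat !size_nseq size_r; have := ltn_ord a; nia.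
Qed.

Lemma subcube_dim_stripes r : subcube_dim (stripes r) = subcube_dim r + (q - 1) * N.
Proof.
rewrite /subcube_dim stripesE !count_cat !count_nseq /= mul1n.
by have := ltn_ord a; nia.
Qed.

Lemma fits_stripes r x :
  size r = N -> size x = q * N -> fits (stripes r) x = fits r (take N (drop (a * N) x)).
Proof.
move=> size_r size_x; rewrite stripesE !fits_catl !fits_stars !size_nseq size_r.
rewrite size_takel ?size_drop ?size_x; last by have := ltn_ord a; nia.
have -> : q * N - a * N - N == (q - a.+1) * N by apply/eqP; have := ltn_ord a; nia.
by rewrite eqxx andbT.
Qed.

End Stripes.

Section Fractal.

Variable q : nat.

Lemma fractalS m :
  fractal q m.+1 =
    [seq Some a :: stripes (ncols q m) a r | a <- enum 'I_q, r <- fractal q m].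
Proof. by []. Qed.

Lemma size_fractal m : size (fractal q m) = q ^ m.
Proof.
by elim: m => // m IHm; rewrite fractalS size_allpairs size_enum_ord IHm expnS.
Qed.

Lemma size_fractal_row m r : r \in fractal q m -> size r = ncols q m.
Proof.
elim: m r => [|m IHm] r; first by rewrite inE => /eqP ->.
rewrite fractalS => /allpairsP[[a r0] /= [_ /IHm size_r0 ->]].
by rewrite /= (size_stripes _ size_r0).
Qed.

Lemma subcube_dim_fractal_row m r :
  0 < q -> r \in fractal q m -> subcube_dim r = ncols q m - m.
Proof.
move=> q_gt0; elim: m r => [|m IHm] r; first by rewrite inE => /eqP ->.
rewrite fractalS => /allpairsP[[a r0] /= [_ /IHm dim_r0 ->]].
have := leq_ncols m q_gt0.
rewrite [subcube_dim _]/= -/(subcube_dim _) subcube_dim_stripes dim_r0 /=.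
nia.
Qed.

Lemma count_fits_fractal m (x : seq 'I_q) :
  size x = ncols q m -> count (fun r => fits r x) (fractal q m) = 1.
Proof.
elim: m x => [|m IHm] [|c x] // [size_x].
have block_count a :
    count (fun r => fits r (c :: x))
          [seq Some a :: stripes (ncols q m) a r | r <- fractal q m] = (a == c).
  rewrite count_map; case: (eqVneq a c) => [->|a_neq_c] /=.
    have chunk_size : size (take (ncols q m) (drop (c * ncols q m) x)) = ncols q m.
      by rewrite size_takel // size_drop size_x; have := ltn_ord c; nia.
    rewrite -(IHm _ chunk_size); apply: eq_in_count => r /size_fractal_row size_r /=.
    by rewrite eqxx fits_stripes.
  rewrite -(count_pred0 (fractal q m)); apply: eq_count => r /=.
  by rewrite eq_sym (negbTE a_neq_c).
rewrite fractalS count_flatten -map_comp (eq_map block_count) (sumn_count (pred1 c)).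
by rewrite count_uniq_mem ?enum_uniq ?mem_enum.
Qed.

End Fractal.

Theorem mainTheorem7 (q m : nat) (hq : 2 <= q) (hm : 1 <= m) :
  @is_partition_star_matrix q ((q ^ m - 1) %/ (q - 1)) (fractal q m) /\
  size (fractal q m) = q ^ m /\
  all (fun r => @subcube_dim q r == (q ^ m - 1) %/ (q - 1) - m) (fractal q m).
Proof.
have q_gt0 : 0 < q by apply: ltnW.
rewrite ncols_div //; split; last split.
- split; first by apply/allP => r /size_fractal_row ->.
  move=> x; rewrite -(@count_fits_fractal q m (codom x)); last first.
    by rewrite size_codom card_ord.
  by apply: eq_in_count => r /size_fractal_row /in_subcube_fits ->.
- exact: size_fractal.
- by apply/allP => r /(subcube_dim_fractal_row q_gt0) ->.
Qed.
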